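(* Let $\phi:\mathsf S\to\mathsf T$ be a morphism in $\mathbf{TEmb}$, i.e. a morphism of polynomial endofunctors between two trees. Then each of the three component maps $\phi_0:S_0\to T_0$, $\phi_1:S_1\to T_1$, $\phi_2:S_2\to T_2$ is injective.
   Context: A polynomial endofunctor $\mathsf P=(P_0,P_1,P_2)$ is a diagram of sets $P_0\xleftarrow{s}P_2\xrightarrow{p}P_1\xrightarrow{t}P_0$ in which $p$ has finite fibres. A morphism $\alpha:\mathsf Q\to\mathsf P$ of polynomial endofunctors is a triple of maps $\alpha_0:Q_0\to P_0$, $\alpha_1:Q_1\to P_1$, $\alpha_2:Q_2\to P_2$ commuting with $s,p,t$ and such that the middle square ($Q_2\to Q_1$ over $P_2\to P_1$) is a pullback; these form the category $\mathbf{PolyEnd}$. A tree is a polynomial endofunctor $\mathsf T$ such that (1) $T_0,T_1,T_2$ are finite; (2) $t$ is injective; (3) $s$ is injective and $T_0\setminus s(T_2)$ is a single element, called the root (so $T_0=T_2+\{\mathrm{root}\}$); (4) with $\sigma:T_0\to T_0$ defined by $\sigma(\mathrm{root})=\mathrm{root}$ and $\sigma(e)=t(p(e))$ for $e\in T_2$, for every $x\in T_0$ there is $k\in\mathbb N$ with $\sigma^k(x)=\mathrm{root}$. Elements of $T_0$ are edges, of $T_1$ nodes; input edges of a node $b$ are the elements of $p^{-1}(b)$, $t(b)$ is its output edge. $\mathbf{TEmb}$ is the full subcategory of $\mathbf{PolyEnd}$ whose objects are trees. *)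

From Stdlib Require Import List.
Set Implicit Arguments.

(* A polynomial endofunctor P0 <-s- P2 -p-> P1 -t-> P0, with p having finite fibres. *)
Record PolyEnd := {
  E0 : Type; E1 : Type; E2 : Type;
  src : E2 -> E0;
  prj : E2 -> E1;
  tgt : E1 -> E0;
  prj_finite_fibres : forall b : E1,
      exists l : list E2, forall e : E2, prj e = b -> In e l }.

(* Morphism of polynomial endofunctors: three maps commuting with s, p, t,
   with the middle square (Q2 -> Q1 over P2 -> P1) a pullback. *)
Record PolyMor (Q P : PolyEnd) := {
  m0 : E0 Q -> E0 P;
  m1 : E1 Q -> E1 P;
  m2 : E2 Q -> E2 P;
  m_src : forall e, m0 (src Q e) = src P (m2 e);
  m_prj : forall e, m1 (prj Q e) = prj P (m2 e);
  m_tgt : forall b, m0 (tgt Q b) = tgt P (m1 b);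
  m_pullback : forall (b : E1 Q) (e : E2 P), prj P e = m1 b ->
      exists e' : E2 Q, prj Q e' = b /\ m2 e' = e /\
        (forall e'' : E2 Q, prj Q e'' = b -> m2 e'' = e -> e'' = e') }.

Definition finite_type (X : Type) : Prop := exists l : list X, forall x : X, In x l.



(* x reaches r by iterating sigma : x = s e |-> t (p e), i.e. sigma^k x = r for some k,
   where sigma r = r. *)
Inductive reaches (T : PolyEnd) (r : E0 T) : E0 T -> Prop :=
  | reaches_root : reaches T r r
  | reaches_step : forall e : E2 T,
      reaches T r (tgt T (prj T e)) -> reaches T r (src T e).

Definition is_root (T : PolyEnd) (r : E0 T) : Prop :=
  (forall e : E2 T, src T e <> r) /\
  (forall x : E0 T, (forall e : E2 T, src T e <> x) -> x = r).

Definition is_tree (T : PolyEnd) : Prop :=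
  finite_type (E0 T) /\ finite_type (E1 T) /\ finite_type (E2 T) /\
  (forall b b' : E1 T, tgt T b = tgt T b' -> b = b') /\
  (forall e e' : E2 T, src T e = src T e' -> e = e') /\
  exists r : E0 T, is_root T r /\ forall x : E0 T, reaches T r x.

From Stdlib Require Import Lia.
Set Implicit Arguments.

(* The key notion is the depth of an edge: [depth T r n x] says that the
   sigma-path from the edge x reaches the root r in exactly n steps.  In a
   tree every edge has a depth, and it is unique because s is injective and
   the root is not an input edge.  A morphism phi commutes with sigma, so it
   shifts depths by the constant k = depth of phi(root).  Hence two edges of
   S with the same image have the same depth, and an induction on that depth
   shows they are equal: equal images of s e1 and s e2 force
   phi2 e1 = phi2 e2 (s is injective in T), the outputs t(p e_i) then agree
   by induction, so p e1 = p e2 (t is injective in S), and the pullback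
   condition makes phi2 injective on each fibre of p.  Injectivity of phi1
   and phi2 then follows from that of phi0 through t and s. *)

Inductive depth (T : PolyEnd) (r : E0 T) : nat -> E0 T -> Prop :=
  | depth_root : depth T r 0 r
  | depth_step : forall n e,
      depth T r n (tgt T (prj T e)) -> depth T r (S n) (src T e).

Lemma reaches_depth (T : PolyEnd) (r x : E0 T) :
  reaches T r x -> exists n, depth T r n x.
Proof.
  induction 1 as [|e _ [n Hn]].
  - exists 0; constructor.
  - exists (S n); constructor; exact Hn.
Qed.

Lemma depth_unique (T : PolyEnd) (r : E0 T)
  (r_not_src : forall e, src T e <> r)
  (src_inj : forall e e', src T e = src T e' -> e = e') :
  forall n x, depth T r n x -> forall m, depth T r m x -> n = m.
Proof.
  induction 1 as [|n e _ IH]; intros m Hm; inversion Hm; subst.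
  - reflexivity.
  - exfalso; exact (r_not_src _ eq_refl).
  - exfalso; exact (r_not_src _ eq_refl).
  - match goal with Hs : src T _ = src T _ |- _ => apply src_inj in Hs; subst end.
    f_equal; auto.
Qed.

Section Morphism.

Variables (S T : PolyEnd) (phi : PolyMor S T).

Lemma depth_shift (rS : E0 S) (rT : E0 T) (k : nat) :
  depth T rT k (m0 phi rS) ->
  forall n x, depth S rS n x -> depth T rT (n + k) (m0 phi x).
Proof.
  intros Hk; induction 1 as [|n e _ IH]; simpl.
  - exact Hk.
  - rewrite m_src; constructor.
    rewrite m_tgt, m_prj in IH; exact IH.
Qed.

Lemma m2_inj_on_fibres (e1 e2 : E2 S) :
  prj S e1 = prj S e2 -> m2 phi e1 = m2 phi e2 -> e1 = e2.
Proof.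
  intros Hp Hm.
  destruct (m_pullback phi (prj S e1) (m2 phi e1)) as [e' [_ [_ Huniq]]].
  { rewrite m_prj; reflexivity. }
  rewrite (Huniq e1), (Huniq e2); auto.
Qed.

Lemma m0_inj_same_depth (rS : E0 S)
  (srcT_inj : forall e e', src T e = src T e' -> e = e')
  (tgtS_inj : forall b b', tgt S b = tgt S b' -> b = b') :
  forall n x y, depth S rS n x -> depth S rS n y ->
    m0 phi x = m0 phi y -> x = y.
Proof.
  induction n as [|n IH]; intros x y Hx Hy Hxy;
    inversion Hx as [|? e1 Hx']; inversion Hy as [|? e2 Hy']; subst; auto.
  rewrite !m_src in Hxy; apply srcT_inj in Hxy.
  assert (Hout : tgt S (prj S e1) = tgt S (prj S e2)).
  { apply IH; auto. rewrite !m_tgt, !m_prj, Hxy; reflexivity. }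
  apply tgtS_inj in Hout.
  rewrite (m2_inj_on_fibres e1 e2 Hout Hxy); reflexivity.
Qed.

Lemma m1_inj_of_m0_inj
  (m0_inj : forall x y, m0 phi x = m0 phi y -> x = y)
  (tgtS_inj : forall b b', tgt S b = tgt S b' -> b = b') :
  forall b b', m1 phi b = m1 phi b' -> b = b'.
Proof.
  intros b b' Hb; apply tgtS_inj, m0_inj.
  rewrite !m_tgt, Hb; reflexivity.
Qed.

Lemma m2_inj_of_m0_inj
  (m0_inj : forall x y, m0 phi x = m0 phi y -> x = y)
  (srcS_inj : forall e e', src S e = src S e' -> e = e') :
  forall e e', m2 phi e = m2 phi e' -> e = e'.
Proof.
  intros e e' He; apply srcS_inj, m0_inj.
  rewrite !m_src, He; reflexivity.
Qed.

End Morphism.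

Theorem mainTheorem1 (S T : PolyEnd) (HS : is_tree S) (HT : is_tree T)
  (phi : PolyMor S T) :
  (forall x y : E0 S, m0 phi x = m0 phi y -> x = y) /\
  (forall x y : E1 S, m1 phi x = m1 phi y -> x = y) /\
  (forall x y : E2 S, m2 phi x = m2 phi y -> x = y).
Proof.
  destruct HS as (_ & _ & _ & tgtS_inj & srcS_inj & rS & _ & reachS).
  destruct HT as (_ & _ & _ & _ & srcT_inj & rT & [rT_not_src _] & reachT).
  assert (m0_inj : forall x y : E0 S, m0 phi x = m0 phi y -> x = y).
  { intros x y Hxy.
    destruct (reaches_depth (reachS x)) as [nx Hx].
    destruct (reaches_depth (reachS y)) as [ny Hy].
    destruct (reaches_depth (reachT (m0 phi rS))) as [k Hk].
    pose proof (depth_shift phi Hk Hx) as Hx'.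
    pose proof (depth_shift phi Hk Hy) as Hy'.
    rewrite Hxy in Hx'.
    assert (nx = ny) by (pose proof (depth_unique rT_not_src srcT_inj Hx' Hy'); lia).
    subst ny; exact (m0_inj_same_depth phi srcT_inj tgtS_inj Hx Hy Hxy). }
  split; [exact m0_inj | split].
  - exact (m1_inj_of_m0_inj phi m0_inj tgtS_inj).
  - exact (m2_inj_of_m0_inj phi m0_inj srcS_inj).
Qed.
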